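(* Let $\mathbb{K}$ be a field and let $A=(a_{ij})\in UU_n(\mathbb{K})$ (the group of $n\times n$ upper triangular unipotent matrices over $\mathbb{K}$) have all super-diagonal entries $a_{i,i+1}$ nonzero. If $B=(b_{ij})\in UU_n(\mathbb{K})$ commutes with $A$, then the first-row entries $b_{12},\dots,b_{1n}$ of $B$ determine all the remaining entries of $B$. If $\mathbb{K}=\mathbb{F}_q$ is a finite field with $q$ elements, then the centralizer of $A$ in $UU_n(\mathbb{F}_q)$ has cardinality $q^{n-1}$. *)

From HB Require Import structures.
From mathcomp Require Import all_boot all_order all_algebra all_field.
Set Implicit Arguments. Unset Strict Implicit. Unset Printing Implicit Defensive.
Import GRing.Theory.
Local Open Scope ring_scope.

Definition unitriangular (R : nzRingType) (n : nat) (A : 'M[R]_n) : Prop :=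
  (forall i j : 'I_n, (j < i)%N -> A i j = 0) /\ (forall i : 'I_n, A i i = 1).

Definition superdiag_nonzero (R : nzRingType) (n : nat) (A : 'M[R]_n) : Prop :=
  forall i j : 'I_n, nat_of_ord j = (nat_of_ord i).+1 -> A i j != 0.

Definition UU_centralizer (F : finFieldType) (n : nat) (A : 'M[F]_n)
  : {set 'M[F]_n} :=
  [set B : 'M[F]_n | [forall i : 'I_n, forall j : 'I_n, ((j < i)%N ==> (B i j == 0))]
     && [forall i : 'I_n, B i i == 1] && (A *m B == B *m A)].

From HB Require Import structures.
From mathcomp Require Import all_boot all_order all_algebra all_field.
From mathcomp Require Import zify.

(* Comparing the entries (i, j) of A D and D A, where the columns of D left of
   j and the entries of column j below row i+1 already vanish, leaves
   a_{i,i+1} d_{i+1,j} = 0; so a matrix commuting with A and vanishing on the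
   first row is zero, and a commuting B is determined by its first row.  For
   the count, write A = 1 + N with N strictly upper triangular: every
   1 + c_1 N + ... + c_{n-1} N^{n-1} lies in the centralizer, and distinct
   coefficient vectors give distinct matrices because the entry (1, k+1) of N^k
   is a nonzero product of superdiagonal entries while N^l vanishes there for
   l > k.  Hence the first-row map is a bijection onto F^{n-1}. *)

Set Implicit Arguments.
Unset Strict Implicit.
Unset Printing Implicit Defensive.

Local Open Scope ring_scope.
Import GRing.Theory.

Lemma unitriangular_mulmx_entry_l (R : nzRingType) n (A D : 'M[R]_n)
    (i k j : 'I_n) :
  unitriangular A -> k = i.+1 :> nat ->
  (forall l : 'I_n, (k < l)%N -> D l j = 0) ->
  (A *m D) i j = D i j + A i k * D k j.
Proof.
move=> [Alow Adiag] ki Dlow.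
rewrite mxE (bigD1 i) //= (bigD1 k) /=; last by rewrite -val_eqE /= ki; lia.
rewrite Adiag mul1r big1 ?addr0 // => l /andP[li lk].
have [lt_li | ge_li] := ltnP l i; first by rewrite Alow // mul0r.
rewrite Dlow ?mulr0 //.
by move: li lk; rewrite -!val_eqE /= ki; lia.
Qed.

Lemma unitriangular_mulmx_entry_r (R : nzRingType) n (A D : 'M[R]_n)
    (i j : 'I_n) :
  unitriangular A -> (forall l : 'I_n, (l < j)%N -> D i l = 0) ->
  (D *m A) i j = D i j.
Proof.
move=> [Alow Adiag] Dleft.
rewrite mxE (bigD1 j) //= Adiag mulr1 big1 ?addr0 // => l lj.
have [lt_lj | ge_lj] := ltnP l j; first by rewrite Dleft // mul0r.
by rewrite Alow ?mulr0 //; move: lj; rewrite -val_eqE /=; lia.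
Qed.

(* D is killed column by column, each column from the bottom up to row 1. *)
Lemma unitriangular_commute_row0_eq0 (R : idomainType) n (A D : 'M[R]_n) :
  unitriangular A -> superdiag_nonzero A -> A *m D = D *m A ->
  (forall i j : 'I_n, i = 0%N :> nat -> D i j = 0) -> D = 0.
Proof.
move=> Aut Asup AD Drow0.
suff Dcol : forall t (j : 'I_n), (j < t)%N -> forall i, D i j = 0.
  by apply/matrixP => i j; rewrite mxE (Dcol n).
elim=> [|t IHt] j // jt.
have Dleft : forall i (l : 'I_n), (l < j)%N -> D i l = 0.
  by move=> i l lj; apply: IHt; lia.
suff Dbelow : forall s (k : 'I_n), (n <= k + s)%N -> D k j = 0.
  by move=> k; apply: (Dbelow n); lia.
elim=> [|s IHs] k ks; first by have := ltn_ord k; lia.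
case k0 : (nat_of_ord k) => [|i]; first exact: Drow0.
have lt_in : (i < n)%N by have := ltn_ord k; lia.
have ki : k = (Ordinal lt_in).+1 :> nat by [].
have := congr1 (fun M : 'M[R]_n => M (Ordinal lt_in) j) AD.
rewrite (unitriangular_mulmx_entry_l Aut ki); last by move=> l kl; apply: IHs; lia.
rewrite (unitriangular_mulmx_entry_r Aut); last by move=> l; apply: Dleft.
rewrite -[RHS]addr0 => /addrI/eqP; rewrite mulf_eq0 => /orP[/eqP Aik|/eqP //].
by have := Asup _ _ ki; rewrite Aik eqxx.
Qed.

Lemma unitriangular_commute_eq_row0 (R : idomainType) n (A B B' : 'M[R]_n) :
  unitriangular A -> superdiag_nonzero A ->
  A *m B = B *m A -> A *m B' = B' *m A ->
  (forall j i : 'I_n, i = 0%N :> nat -> B i j = B' i j) -> B = B'.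
Proof.
move=> Aut Asup AB AB' row0; apply/eqP; rewrite -subr_eq0; apply/eqP.
apply: (unitriangular_commute_row0_eq0 Aut Asup).
  by rewrite mulmxBr mulmxBl AB AB'.
by move=> i j i0; rewrite !mxE row0 // subrr.
Qed.

Definition strictly_upper (R : nzRingType) n (N : 'M[R]_n) : Prop :=
  forall i j : 'I_n, (j <= i)%N -> N i j = 0.

Lemma expr_strictly_upper_eq0 (R : nzRingType) m (N : 'M[R]_m.+1) :
  strictly_upper N ->
  forall k (i j : 'I_m.+1), (j < i + k)%N -> (N ^+ k) i j = 0.
Proof.
move=> Nupper; elim=> [|k IHk] i j ji.
  by rewrite expr0 -idmxE mxE; case: eqP => // eq_ij; rewrite eq_ij addn0 ltnn in ji.
rewrite exprS -mulmxE mxE big1 // => l _.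
have [le_li | lt_il] := leqP l i; first by rewrite Nupper // mul0r.
by rewrite IHk ?mulr0 //; lia.
Qed.

(* The (i, i+k) entry of N^k is the product of the k superdiagonal entries of
   N between rows i and i+k. *)
Lemma expr_strictly_upper_neq0 (R : idomainType) m (N : 'M[R]_m.+1) :
  strictly_upper N -> superdiag_nonzero N ->
  forall k (i j : 'I_m.+1), j = (i + k)%N :> nat -> (N ^+ k) i j != 0.
Proof.
move=> Nupper Nsup; elim=> [|k IHk] i j ji.
  rewrite expr0 -idmxE mxE (_ : i == j) ?oner_neq0 //.
  by apply/eqP/val_inj; rewrite /= ji addn0.
have lt_i1 : (i.+1 < m.+1)%N by have := ltn_ord j; lia.
rewrite exprS -mulmxE mxE (bigD1 (Ordinal lt_i1)) //= big1 => [|l li1].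
  by rewrite addr0 mulf_neq0 ?Nsup ?IHk //= ji; lia.
have [le_li | lt_il] := leqP l i; first by rewrite Nupper // mul0r.
rewrite (expr_strictly_upper_eq0 Nupper) ?mulr0 //.
by move: li1; rewrite -val_eqE /=; lia.
Qed.

Lemma strictly_upper_powers_free (R : idomainType) m (N : 'M[R]_m.+1)
    (d : 'I_m -> R) :
  strictly_upper N -> superdiag_nonzero N ->
  \sum_(k < m) d k *: N ^+ k.+1 = 0 -> forall k, d k = 0.
Proof.
move=> Nupper Nsup dN0.
suff dlt : forall t (k : 'I_m), (k < t)%N -> d k = 0 by move=> k; apply: (dlt m).
elim=> [|t IHt] // k kt.
have := congr1 (fun M : 'M[R]_m.+1 => M ord0 (lift ord0 k)) dN0.
rewrite summxE [RHS]mxE (bigD1 k) //= big1 => [|l lk]; last first.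
  rewrite mxE; have [lt_lk | ge_lk] := ltnP l k; first by rewrite IHt ?mul0r //; lia.
  rewrite (expr_strictly_upper_eq0 Nupper) ?mulr0 //=.
  by move: lk; rewrite /bump /= -val_eqE /=; lia.
rewrite addr0 mxE => /eqP; rewrite mulf_eq0 => /orP[/eqP //|].
by rewrite (negbTE (expr_strictly_upper_neq0 Nupper Nsup _)) //= /bump leq0n add1n.
Qed.

Definition unipotent_poly (R : comNzRingType) m (N : 'M[R]_m.+1)
    (c : {ffun 'I_m -> R}) : 'M[R]_m.+1 := 1 + \sum_(k < m) c k *: N ^+ k.+1.

Lemma unipotent_poly_inj (R : idomainType) m (N : 'M[R]_m.+1) :
  strictly_upper N -> superdiag_nonzero N ->
  injective (unipotent_poly N).
Proof.
move=> Nupper Nsup c c' /addrI /eqP; rewrite -subr_eq0 -sumrB => /eqP cc'N.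
apply/ffunP => k; apply/eqP; rewrite -subr_eq0; apply/eqP.
apply: (strictly_upper_powers_free (d := fun k => c k - c' k) Nupper Nsup).
by rewrite -[RHS]cc'N; apply: eq_bigr => l _; rewrite scalerBl.
Qed.

Lemma unipotent_poly_unitriangular (R : comNzRingType) m (N : 'M[R]_m.+1) c :
  strictly_upper N -> unitriangular (unipotent_poly N c).
Proof.
move=> Nupper; have powers0 : strictly_upper (\sum_(k < m) c k *: N ^+ k.+1).
  move=> i j ji; rewrite summxE big1 // => k _.
  by rewrite mxE (expr_strictly_upper_eq0 Nupper) ?mulr0 //; lia.
split=> [i j ji | i]; rewrite mxE powers0 ?mxE ?eqxx ?addr0 //.
- by case: eqP => // eq_ij; rewrite eq_ij ltnn in ji.
- exact: ltnW.
Qed.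

Lemma commr_unipotent_poly (R : comNzRingType) m (N : 'M[R]_m.+1) c :
  GRing.comm N (unipotent_poly N c).
Proof.
apply: commrD; first exact: commr1.
rewrite /GRing.comm mulr_sumr mulr_suml; apply: eq_bigr => k _.
by rewrite -scalerAr -scalerAl -exprS exprSr.
Qed.

Lemma unitriangular_subr1_strictly_upper (R : nzRingType) n (A : 'M[R]_n) :
  unitriangular A -> strictly_upper (A - 1).
Proof.
move=> [Alow Adiag] i j; rewrite leq_eqVlt => /orP[/eqP/val_inj <- | ji].
  by rewrite !mxE Adiag eqxx subrr.
rewrite !mxE Alow // (_ : (i == j) = false) ?subr0 //.
by apply/eqP => eq_ij; rewrite eq_ij ltnn in ji.
Qed.

Lemma superdiag_nonzero_subr1 (R : nzRingType) n (A : 'M[R]_n) :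
  superdiag_nonzero A -> superdiag_nonzero (A - 1).
Proof.
move=> Asup i j ji; rewrite !mxE (_ : (i == j) = false) ?subr0 ?Asup //.
by apply/eqP => eq_ij; move: ji; rewrite eq_ij; lia.
Qed.

Lemma UU_centralizerP (F : finFieldType) n (A B : 'M[F]_n) :
  reflect (unitriangular B /\ A *m B = B *m A) (B \in UU_centralizer A).
Proof.
rewrite inE; apply: (iffP andP).
  move=> [/andP[/forallP Blow /forallP Bdiag] /eqP AB]; split=> //.
  split=> [i j ji | i]; apply/eqP; last exact: Bdiag.
  exact: (implyP (forallP (Blow i) j)).
move=> [[Blow Bdiag] AB]; split; last exact/eqP.
apply/andP; split; apply/forallP => i; last exact/eqP.
by apply/forallP => j; apply/implyP => ji; apply/eqP/Blow.
Qed.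

Section CentralizerCardinality.

Variables (F : finFieldType) (m : nat) (A : 'M[F]_m.+1).
Hypotheses (Aut : unitriangular A) (Asup : superdiag_nonzero A).

Lemma card_UU_centralizer_le : (#|UU_centralizer A| <= #|F| ^ m)%N.
Proof.
pose row0 (B : 'M[F]_m.+1) : {ffun 'I_m -> F} := [ffun k => B ord0 (lift ord0 k)].
rewrite -(card_in_imset (f := row0)); last first.
  move=> B B' /UU_centralizerP[[_ Bdiag] AB] /UU_centralizerP[[_ B'diag] AB'] eq_row0.
  apply: (unitriangular_commute_eq_row0 Aut Asup AB AB') => j i /(@ord_inj _ _ ord0) ->.
  case: (unliftP ord0 j) => [k -> | ->]; last by rewrite Bdiag B'diag.
  by move/ffunP: eq_row0 => /(_ k); rewrite !ffunE.
by apply: leq_trans (max_card _) _; rewrite card_ffun card_ord.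
Qed.

Lemma card_UU_centralizer_ge : (#|F| ^ m <= #|UU_centralizer A|)%N.
Proof.
have Nupper := unitriangular_subr1_strictly_upper Aut.
have Nsup := superdiag_nonzero_subr1 Asup.
rewrite -[m in (_ ^ m)%N]card_ord -card_ffun -cardsT.
rewrite -(card_imset _ (unipotent_poly_inj Nupper Nsup)).
apply/subset_leq_card/subsetP => _ /imsetP[c _ ->].
apply/UU_centralizerP; split; first exact: unipotent_poly_unitriangular.
have: GRing.comm (A - 1 + 1) (unipotent_poly (A - 1) c).
  by apply/commr_sym/commrD; [exact/commr_sym/commr_unipotent_poly | exact: commr1].
by rewrite subrK mulmxE.
Qed.

End CentralizerCardinality.

Theorem lemma11p2 :
  (forall (K : fieldType) (n : nat) (A B B' : 'M[K]_n),
      unitriangular A -> superdiag_nonzero A ->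
      unitriangular B -> A *m B = B *m A ->
      unitriangular B' -> A *m B' = B' *m A ->
      (forall j : 'I_n, forall i : 'I_n, nat_of_ord i = 0%N -> B i j = B' i j) ->
      B = B')
  /\
  (forall (F : finFieldType) (n : nat) (A : 'M[F]_n),
      unitriangular A -> superdiag_nonzero A ->
      #|UU_centralizer A| = (#|F| ^ (n - 1))%N).
Proof.
split=> [K n A B B' Aut Asup _ AB _ AB' | F [|m] A Aut Asup].
- exact: (unitriangular_commute_eq_row0 Aut Asup AB AB').
- rewrite (_ : UU_centralizer A = setT) ?cardsT ?card_mx //.
  apply/setP => B; rewrite in_setT; apply/UU_centralizerP.
  by split; [split=> -[] | apply/matrixP => -[]].
- apply/eqP; rewrite subSS subn0 eqn_leq.
  by rewrite card_UU_centralizer_le ?card_UU_centralizer_ge.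
Qed.
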